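(* Let $(X,\mu)$ and $(Y,\nu)$ be measure spaces with positive measures $\mu,\nu$, and let $\mathcal F\subseteq L^1(X,\mu)\times L^1(Y,\nu)$ be a family of pairs of real-valued functions. Assume there exist real numbers $p,q>1$ and $a,b,c>0$ such that for every $(f,g)\in\mathcal F$: (i) $\|g\|_{L^\infty(Y,\nu)}\le a\|f\|_{L^1(X,\mu)}$; (ii) $\|g\|_{L^q(Y,\nu)}\le b\|f\|_{L^p(X,\mu)}$; (iii) $\|f\|_{L^p(X,\mu)}\le c\|g\|_{L^q(Y,\nu)}$; (iv) $\int_X f\,d\mu\le 0$ and $\int_Y g\,d\nu\le 0$. Then for every $(f,g)\in\mathcal F$ with $(f,g)\neq(0,0)$, $$\mu(\{x\in X: f(x)<0\})^{1/p'}\,\nu(\{y\in Y: g(y)<0\})^{1/q}\ \ge\ a^{-1}b^{-q'/q}(2c)^{-q'},$$ where $p'=p/(p-1)$ and $q'=q/(q-1)$. *)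

From HB Require Import structures.
From mathcomp Require Import all_boot all_order all_algebra.
From mathcomp Require Import all_classical all_reals all_analysis.

From HB Require Import structures.
From mathcomp Require Import all_boot all_order all_algebra.
From mathcomp Require Import all_classical all_reals all_analysis.
From mathcomp Require Import measurable_realfun ess_sup_inf ring lra.
Set Implicit Arguments.
Unset Strict Implicit.
Unset Printing Implicit Defensive.
Import Order.TTheory GRing.Theory Num.Theory.
Local Open Scope classical_set_scope.
Local Open Scope ring_scope.

(* Write A = [f < 0], B = [g < 0] and N = ||g||_oo.  Since the integrals of f
   and g are nonpositive, |f| and |g| carry at least half of their L^1 mass on
   A and B.  Hence (i), Hoelder on A and (iii) give
   N <= a ||f||_1 <= 2 a ||f||_p mu(A)^(1/p') <= 2 a c ||g||_q mu(A)^(1/p'),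
   while interpolating between L^1 and L^oo gives
   ||g||_q^q <= N^(q-1) ||g||_1 <= 2 N^q nu(B).
   As soon as N > 0, which is where (f, g) <> (0, 0) is used, this yields
   1 <= 2^(1 + 1/q) a c mu(A)^(1/p') nu(B)^(1/q).  The stated constant is
   smaller because (ii) and (iii) force b c >= 1. *)

Lemma le_poweRV (R : realType) (x y : \bar R) (r : R) : 0 < r -> (0 <= x)%E ->
  (x `^ r <= y)%E -> (x <= y `^ r^-1)%E.
Proof.
move=> r0 x0 xy; rewrite -[leLHS](poweRe1 x0) -(mulfV (lt0r_neq0 r0)) poweRrM.
apply: gt0_ler_poweR => //; first by rewrite invr_ge0 ltW.
- by rewrite in_itv /= poweR_ge0 leey.
- by rewrite in_itv /= (le_trans (poweR_ge0 _ _) xy) leey.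
Qed.

Lemma le1_mul_sandwich (R : realType) (x y : \bar R) (b c : R) : 0 < b ->
  x \is a fin_num -> (0 < x)%E -> (x <= b%:E * y)%E -> (y <= c%:E * x)%E ->
  1 <= b * c.
Proof.
move=> b0 xfin x0 xy yx.
have : (x * 1%:E <= x * (b * c)%:E)%E.
  by rewrite mule1 EFinM muleC -muleA (le_trans xy) // lee_wpmul2l // ltW.
by rewrite lee_pmul2l // lee_fin.
Qed.

Section Lnorm_bounds.
Context d (T : measurableType d) (R : realType) (mu : {measure set T -> \bar R}).
Local Notation "'N_ p [ f ]" := (Lnorm mu p (EFin \o f)).
Local Open Scope ereal_scope.

Lemma measurable_ltr0 (h : T -> R) : measurable_fun setT h ->
  measurable [set x | (h x < 0)%R].
Proof.
move=> mh.
have mhE : measurable_fun setT (EFin \o h : T -> \bar R) by apply/measurable_EFinP.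
have := measurable_lte measurableT mhE (measurable_cst (0 : \bar R)).
by rewrite setTI; under eq_set do rewrite lte_fin.
Qed.

Lemma Lnorm_eq0_ae (h : T -> R) (p : \bar R) : measurable_fun setT h -> 0 < p ->
  'N_p[h] = 0 -> \forall x \ae mu, h x = 0%R.
Proof.
move=> mh p0 N0.
have mhE : measurable_fun setT (EFin \o h : T -> \bar R) by apply/measurable_EFinP.
by apply: filterS (Lnorm_eq0_eq0 mhE p0 N0) => x /(_ I) [].
Qed.

Lemma Lnorm1_lty (h : T -> R) : mu.-integrable setT (EFin \o h) -> 'N_1%:E[h] < +oo.
Proof. by rewrite Lnorm1 => /integrableP[]. Qed.

(* |h| = h + 2 h^- and the integral of h is nonpositive. *)
Lemma Lnorm1_le_negpart (h : T -> R) : mu.-integrable setT (EFin \o h) ->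
  \int[mu]_x (h x)%:E <= 0 ->
  'N_1%:E[h] <= 2%:E * \int[mu]_x (`|h x| * \1_[set x | h x < 0] x)%:E.
Proof.
move=> ih h0; set S := [set x | (h x < 0)%R].
have mh : measurable_fun setT h by apply/measurable_EFinP; exact: measurable_int ih.
have mS : measurable S := measurable_ltr0 mh.
have ineg : mu.-integrable setT (fun x => (`|h x| * \1_S x)%:E).
  apply: (le_integrable measurableT _ _ (integrable_abse ih)) => /=.
    apply/measurable_EFinP/measurable_funM; first exact: measurableT_comp.
    exact/measurable_indic.
  move=> x _ /=; rewrite lee_fin normrM !normr_id -[leRHS]mulr1 ler_wpM2l //.
  by rewrite indicE; case: (_ \in _); rewrite ?normr1 ?normr0.
have habs x : (`|h x|)%:E = (h x)%:E + 2%:E * (`|h x| * \1_S x)%:E.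
  rewrite -EFinM -EFinD; congr EFin; rewrite indicE.
  case: (ltrP (h x) 0) => hx; first by rewrite mem_set // mulr1 ltr0_norm //; lra.
  rewrite memNset /= ?mulr0 ?addr0 ?ger0_norm //.
  by rewrite /S /=; apply/negP; rewrite -leNgt.
rewrite Lnorm1; under eq_integral => x _ do rewrite /= habs.
rewrite integralD //; last exact: integrableZl.
by rewrite integralZl // -[leRHS]add0e leeD2r.
Qed.

Lemma ae_abs_le_Linfty (g : T -> R) : \forall x \ae mu, (`|g x|)%:E <= 'N_+oo[g].
Proof.
rewrite unlock /=; case: ifPn => [|]; first by move=> _; exact: ess_sup_ge.
rewrite ltNge => /negbNE muT0; exists setT; split => //.
by apply/eqP; rewrite eq_le muT0 measure_ge0.
Qed.

Lemma integral_indic_le_Linfty (g : T -> R) (S : set T) : measurable S ->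
  measurable_fun setT g ->
  \int[mu]_x (`|g x| * \1_S x)%:E <= 'N_+oo[g] * mu S.
Proof.
move=> mS mg; have mI : measurable_fun setT (\1_S : T -> R) by exact/measurable_indic.
rewrite -[in leRHS](setIT S) -integral_indic // -ge0_integralZl ?Lnorm_ge0 //; last first.
  exact/measurable_EFinP.
apply: ae_ge0_le_integral => //.
- apply/measurable_EFinP/measurable_funM => //; exact: measurableT_comp.
- by move=> x _; rewrite mule_ge0 ?Lnorm_ge0 // lee_fin.
- by apply: emeasurable_funM => //; exact/measurable_EFinP.
apply: filterS (ae_abs_le_Linfty g) => x gx _.
by rewrite indicE; case: (_ \in _); rewrite ?mulr1 ?mule1 ?mulr0 ?mule0.
Qed.

Lemma integral_indic_le_Lnorm (f : T -> R) (S : set T) (p : R) : (1 < p)%R ->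
  measurable S -> measurable_fun setT f ->
  \int[mu]_x (`|f x| * \1_S x)%:E <= 'N_p%:E[f] * mu S `^ ((p / (p - 1))^-1).
Proof.
move=> p1 mS mf; set p' := (p / (p - 1))%R.
have p'0 : (0 < p')%R by rewrite divr_gt0 //; lra.
have mI : measurable_fun setT (\1_S : T -> R) by exact/measurable_indic.
have := hoelder mu mf mI (_ : 0 < p)%R p'0 (_ : p^-1 + p'^-1 = 1)%R.
have -> : 'N_1%:E[f \* \1_S]%R = \int[mu]_x (`|f x| * \1_S x)%:E.
  by rewrite Lnorm1; apply: eq_integral => x _ /=; rewrite normrM [`|\1_S x|%R]ger0_norm.
have -> : 'N_p'%:E[\1_S] = mu S `^ p'^-1.
  rewrite unlock /= -[in RHS](setIT S) -integral_indic //; congr poweR.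
  apply: eq_integral => x _; rewrite indicE; case: (_ \in _).
    by rewrite normr1 powR1.
  by rewrite normr0 powR0 // gt_eqF.
by apply; [lra | rewrite /p' invf_div; field; lra].
Qed.

(* Pointwise, |g|^q <= n^(q-1) |g| almost everywhere. *)
Lemma Lnorm_powR_le_Linfty (g : T -> R) (n q : R) : (1 < q)%R ->
  measurable_fun setT g -> (\forall x \ae mu, `|g x| <= n)%R ->
  'N_q%:E[g] `^ q <= (n `^ (q - 1))%:E * 'N_1%:E[g].
Proof.
move=> q1 mg gn; rewrite poweR_Lnorm; last by apply: lt0r_neq0; lra.
rewrite Lnorm1 /comp; under eq_integral => x _ do rewrite abse_EFin poweR_EFin.
under [X in _ <= _ * X]eq_integral => x _ do rewrite abse_EFin.
rewrite -ge0_integralZl ?lee_fin ?powR_ge0 //; last first.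
  exact/measurable_EFinP/measurableT_comp.
apply: ae_ge0_le_integral => //.
- apply/measurable_EFinP.
  apply: (@measurableT_comp _ _ _ _ _ _ (@powR R ^~ q)) => //.
  exact: measurableT_comp.
- by move=> x _; rewrite mule_ge0 // lee_fin powR_ge0.
- by apply: emeasurable_funM => //; exact/measurable_EFinP/measurableT_comp.
apply: filterS gn => x gxn _ /=.
rewrite -EFinM lee_fin -mulr_powRB1 //; last lra.
rewrite mulrC ler_wpM2r // ge0_ler_powR //; try lra.
by rewrite nnegrE (le_trans _ gxn).
Qed.

End Lnorm_bounds.

Lemma constant_le_inv (R : realType) (a b c q : R) :
  1 < q -> 0 < a -> 0 < b -> 0 < c -> 1 <= b * c ->
  a^-1 * b `^ (- (q / (q - 1) / q)) * (2 * c) `^ (- (q / (q - 1))) <=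
  (2 * a * c * 2 `^ q^-1)^-1.
Proof.
move=> q1 a0 b0 c0 bc; set s := q / (q - 1).
have s_q : s / q = s - 1 by rewrite /s; field; lra.
have s_ge : 1 + q^-1 <= s.
  rewrite -subr_ge0 (_ : s - _ = (q * (q - 1))^-1); last by rewrite /s; field; lra.
  by rewrite invr_ge0 mulr_ge0 //; lra.
have qV0 : 0 < q^-1 by rewrite invr_gt0; lra.
have l2 : 0 <= ln (2 : R) by rewrite ln_ge0 //; lra.
have lbc : 0 <= ln b + ln c by rewrite -lnM ?posrE // ln_ge0.
have lnMp (x y : R) : 0 < x -> 0 < y -> ln (x * y) = ln x + ln y.
  by move=> x0 y0; rewrite lnM ?posrE.
have lnVp (x : R) : 0 < x -> ln x^-1 = - ln x by move=> x0; rewrite lnV ?posrE.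
have c2 : 0 < 2 * c by rewrite mulr_gt0.
have aV : 0 < a^-1 by rewrite invr_gt0.
rewrite -ler_ln ?posrE ?invr_gt0 ?mulr_gt0 ?powR_gt0 //.
rewrite lnVp ?mulr_gt0 ?powR_gt0 // !lnMp ?mulr_gt0 ?powR_gt0 ?invr_gt0 //.
rewrite lnVp // !ln_powR s_q lnMp //.
have : 0 <= (s - 1) * (ln b + ln c) by rewrite mulr_ge0 //; lra.
have : 0 <= (s - 1 - q^-1) * ln 2 by rewrite mulr_ge0 //; lra.
lra.
Qed.

Section nonzero_pair.
Context (R : realType) (d1 : measure_display) (X : measurableType d1)
  (mu : {measure set X -> \bar R}) (d2 : measure_display) (Y : measurableType d2)
  (nu : {measure set Y -> \bar R}).
Variables (f : X -> R) (g : Y -> R) (p q a b c : R).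
Hypotheses (intf : mu.-integrable setT (EFin \o f)) (intg : nu.-integrable setT (EFin \o g)).
Hypotheses (p1 : 1 < p) (q1 : 1 < q) (a0 : 0 < a) (b0 : 0 < b) (c0 : 0 < c).
Local Open Scope ereal_scope.
Local Notation N1f := 'N[mu]_(1%:E)[EFin \o f].
Local Notation Npf := 'N[mu]_(p%:E)[EFin \o f].
Local Notation N1g := 'N[nu]_(1%:E)[EFin \o g].
Local Notation Nqg := 'N[nu]_(q%:E)[EFin \o g].
Local Notation Ninf := 'N[nu]_(+oo)[EFin \o g].
Local Notation K := (mu [set x | (f x < 0)%R] `^ ((p / (p - 1))^-1)).
Local Notation L := (nu [set y | (g y < 0)%R] `^ q^-1).
Hypothesis Linfty_le_L1 : Ninf <= a%:E * N1f.
Hypothesis Lq_le_Lp : Nqg <= b%:E * Npf.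
Hypothesis Lp_le_Lq : Npf <= c%:E * Nqg.
Hypotheses (f_le0 : \int[mu]_x (f x)%:E <= 0) (g_le0 : \int[nu]_y (g y)%:E <= 0).

Let p0 : (0 < p)%R := lt_trans ltr01 p1.
Let q0 : (0 < q)%R := lt_trans ltr01 q1.

Let mf : measurable_fun setT f.
Proof. by apply/measurable_EFinP; exact: measurable_int intf. Qed.

Let mg : measurable_fun setT g.
Proof. by apply/measurable_EFinP; exact: measurable_int intg. Qed.

Lemma L1_le_Lp_negset : N1f <= 2%:E * (Npf * K).
Proof.
apply: le_trans (Lnorm1_le_negpart intf f_le0) _; rewrite lee_wpmul2l ?lee_fin //.
exact: integral_indic_le_Lnorm p1 (measurable_ltr0 mf) mf.
Qed.

Lemma L1_le_Linfty_negset : N1g <= 2%:E * (Ninf * nu [set y | (g y < 0)%R]).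
Proof.
apply: le_trans (Lnorm1_le_negpart intg g_le0) _; rewrite lee_wpmul2l ?lee_fin //.
exact: integral_indic_le_Linfty (measurable_ltr0 mg) mg.
Qed.

Lemma Linfty_fin_num : Ninf \is a fin_num.
Proof.
rewrite ge0_fin_numE ?Lnorm_ge0 // (le_lt_trans Linfty_le_L1) //.
by rewrite lte_mul_pinfty ?lee_fin ?ltW // Lnorm1_lty.
Qed.

Local Notation n := (fine Ninf).

Let abs_g_le_Linfty : \forall y \ae nu, (`|g y| <= n)%R.
Proof.
apply: filterS (ae_abs_le_Linfty nu g) => y.
by rewrite -[in X in X -> _](fineK Linfty_fin_num) lee_fin.
Qed.

Lemma Linfty_le_Lq : Ninf <= (2 * a * c)%:E * (Nqg * K).
Proof.
have a0' : 0 <= a%:E by rewrite lee_fin ltW.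
apply: le_trans Linfty_le_L1 (le_trans (lee_wpmul2l a0' L1_le_Lp_negset) _).
rewrite !EFinM -!muleA muleCA; apply: lee_wpmul2l => //; apply: lee_wpmul2l => //.
by rewrite muleA; apply: lee_wpmul2r; rewrite ?poweR_ge0.
Qed.

Lemma Lq_powR_le : Nqg `^ q <= (2 * n `^ q)%:E * nu [set y | (g y < 0)%R].
Proof.
have n0 : (0 <= n)%R by rewrite fine_ge0 ?Lnorm_ge0.
apply: (le_trans (Lnorm_powR_le_Linfty q1 mg abs_g_le_Linfty)).
apply: (le_trans (lee_wpmul2l _ L1_le_Linfty_negset)); first by rewrite lee_fin powR_ge0.
move: n0 Linfty_fin_num; case: Ninf => //= r r0 _.
by rewrite muleCA !muleA -!EFinM -mulrA [(_ * r)%R]mulrC mulr_powRB1.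
Qed.

Lemma Lq_le_Linfty : Nqg <= (2 `^ q^-1 * n)%:E * L.
Proof.
have n0 : (0 <= n)%R by rewrite fine_ge0 ?Lnorm_ge0.
apply: le_trans (le_poweRV q0 (Lnorm_ge0 _ _ _) Lq_powR_le) _.
rewrite poweRM ?measure_ge0 ?lee_fin ?mulr_ge0 ?powR_ge0 // poweR_EFin.
by rewrite powRM ?powR_ge0 // -powRrM mulfV ?lt0r_neq0 // powRr1.
Qed.

Hypothesis nonzero : ~ ((\forall x \ae mu, f x = 0%R) /\ (\forall y \ae nu, g y = 0%R)).

Lemma Linfty_gt0 : (0 < n)%R.
Proof.
rewrite lt0r fine_ge0 ?Lnorm_ge0 // andbT; apply/eqP => n0; apply: nonzero.
have Ninf0 : Ninf = 0 by rewrite -(fineK Linfty_fin_num) n0.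
have Nq0 : Nqg = 0.
  apply/eqP; rewrite eq_le Lnorm_ge0 andbT (le_trans Lq_le_Linfty) //.
  by rewrite n0 mulr0 mul0e.
have Np0 : Npf = 0.
  by apply/eqP; rewrite eq_le Lnorm_ge0 andbT (le_trans Lp_le_Lq) // Nq0 mule0.
split; first exact: Lnorm_eq0_ae mf _ Np0.
exact: Lnorm_eq0_ae mg (ltry _) Ninf0.
Qed.

Lemma Lq_fin_num : Nqg \is a fin_num.
Proof.
rewrite ge0_fin_numE ?Lnorm_ge0 // (@lty_poweRy _ _ q) ?lt0r_neq0 //.
apply: le_lt_trans (Lnorm_powR_le_Linfty q1 mg abs_g_le_Linfty) _.
by rewrite lte_mul_pinfty ?lee_fin ?powR_ge0 // Lnorm1_lty.
Qed.

Lemma Lq_gt0 : 0 < Nqg.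
Proof.
rewrite lt0e Lnorm_ge0 andbT; apply/eqP => Nq0.
have := Linfty_le_Lq; rewrite Nq0 mul0e mule0 -(fineK Linfty_fin_num) lee_fin.
by rewrite leNgt Linfty_gt0.
Qed.

Lemma one_le_negset_measures : 1 <= (2 * a * c * 2 `^ q^-1)%:E * (K * L).
Proof.
have K0 : 0 <= K by rewrite poweR_ge0.
have C0 : 0 <= (2 * a * c)%:E by rewrite lee_fin !mulr_ge0 // ltW.
have := le_trans Linfty_le_Lq (lee_wpmul2l C0 (lee_wpmul2r K0 Lq_le_Linfty)).
move: Linfty_gt0 Linfty_fin_num; case: Ninf => //= r r0 _ Hr.
rewrite -(@lee_pmul2l _ r%:E) ?lte_fin // mule1 (le_trans Hr) //.
by rewrite -muleA [L * K]muleC !muleA -!EFinM [(r * _)%R]mulrC mulrA.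
Qed.

Lemma negset_measures_lower_bound :
  (a^-1 * b `^ (- (q / (q - 1) / q)) * (2 * c) `^ (- (q / (q - 1))))%:E <= K * L.
Proof.
have bc : (1 <= b * c)%R := le1_mul_sandwich b0 Lq_fin_num Lq_gt0 Lq_le_Lp Lp_le_Lq.
have C0 : (0 < 2 * a * c * 2 `^ q^-1)%R by rewrite !mulr_gt0 ?powR_gt0.
apply: le_trans (_ : (2 * a * c * 2 `^ q^-1)^-1%:E <= _).
  by rewrite lee_fin constant_le_inv.
by rewrite -[leLHS]mule1 lee_pdivrMl // one_le_negset_measures.
Qed.

End nonzero_pair.

Theorem mainTheorem1 (R : realType)
  (d1 : measure_display) (X : measurableType d1) (mu : {measure set X -> \bar R})
  (d2 : measure_display) (Y : measurableType d2) (nu : {measure set Y -> \bar R})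
  (F : set ((X -> R) * (Y -> R)))
  (HF1 : forall fg, F fg ->
     mu.-integrable setT (EFin \o fg.1) /\ nu.-integrable setT (EFin \o fg.2))
  (p q a b c : R) (hp : 1 < p) (hq : 1 < q) (ha : 0 < a) (hb : 0 < b) (hc : 0 < c)
  (Hi : forall fg, F fg ->
     ('N[nu]_(+oo%E)[EFin \o fg.2] <= a%:E * 'N[mu]_(1%:E)[EFin \o fg.1])%E)
  (Hii : forall fg, F fg ->
     ('N[nu]_(q%:E)[EFin \o fg.2] <= b%:E * 'N[mu]_(p%:E)[EFin \o fg.1])%E)
  (Hiii : forall fg, F fg ->
     ('N[mu]_(p%:E)[EFin \o fg.1] <= c%:E * 'N[nu]_(q%:E)[EFin \o fg.2])%E)
  (Hiv : forall fg, F fg ->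
     (\int[mu]_x (fg.1 x)%:E <= 0)%E /\ (\int[nu]_y (fg.2 y)%:E <= 0)%E) :
  forall fg, F fg ->
    ~ ((\forall x \ae mu, fg.1 x = 0) /\ (\forall y \ae nu, fg.2 y = 0)) ->
    let p' := p / (p - 1) in
    let q' := q / (q - 1) in
    ((a^-1 * b `^ (- (q' / q)) * (2 * c) `^ (- q'))%:E <=
      (mu [set x | (fg.1 x < 0)%R]) `^ (p'^-1) * (nu [set y | (fg.2 y < 0)%R]) `^ (q^-1))%E.
Proof.
move=> fg Ffg nonzero; have [intf intg] := HF1 fg Ffg; have [f_le0 g_le0] := Hiv fg Ffg.
exact: negset_measures_lower_bound intf intg hp hq ha hb hc
  (Hi fg Ffg) (Hii fg Ffg) (Hiii fg Ffg) f_le0 g_le0 nonzero.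
Qed.
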